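(* Let $\mathcal{A}=\langle Q,A,E,I,T\rangle$ be a finite automaton over the free monoid $A^*$ and let $\omega$ and $\omega'$ be two total orders on $Q$. Then $$\mathbf{N}\wedge\mathbf{S}\wedge\mathbf{P}\ \vdash\ \mathsf{SR}_\omega(\mathcal{A})\equiv\mathsf{SR}_{\omega'}(\mathcal{A}),$$ that is, the two expressions produced by the system-solution method for the orders $\omega$ and $\omega'$ can be proved equal using the natural identities $\mathbf{N}$ together with the aperiodic identities $\mathbf{S}$ and $\mathbf{P}$.
   Context: Rational expressions over $A^*$ are the well-formed formulas built from the constants $\mathsf{0}$ and $\mathsf{1}$ and the letters of $A$ by the binary operators $+$ and $\cdot$ and the unary operator ${}^*$. The expression $\mathsf{E}$ denotes the language $|\mathsf{E}|\subseteq A^*$ in the usual way. All expressions are taken reduced modulo the trivial identities $\mathsf{E}+\mathsf{0}\equiv\mathsf{E}$, $\mathsf{0}+\mathsf{E}\equiv\mathsf{E}$, $\mathsf{E}\cdot\mathsf{0}\equiv\mathsf{0}$, $\mathsf{0}\cdot\mathsf{E}\equiv\mathsf{0}$, $\mathsf{E}\cdot\mathsf{1}\equiv\mathsf{E}$, $\mathsf{1}\cdot\mathsf{E}\equiv\mathsf{E}$, $\mathsf{0}^*\equiv\mathsf{1}$. All computations on expressions below are performed modulo these identities. The natural identities $\mathbf{N}$ are: - associativity: $(\mathsf{E}+\mathsf{F})+\mathsf{G}\equiv\mathsf{E}+(\mathsf{F}+\mathsf{G})$ and $(\mathsf{E}\cdot\mathsf{F})\cdot\mathsf{G}\equiv\mathsf{E}\cdot(\mathsf{F}\cdot\mathsf{G})$;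 - distributivity: $\mathsf{E}\cdot(\mathsf{F}+\mathsf{G})\equiv\mathsf{E}\cdot\mathsf{F}+\mathsf{E}\cdot\mathsf{G}$ and $(\mathsf{E}+\mathsf{F})\cdot\mathsf{G}\equiv\mathsf{E}\cdot\mathsf{G}+\mathsf{F}\cdot\mathsf{G}$; - commutativity: $\mathsf{E}+\mathsf{F}\equiv\mathsf{F}+\mathsf{E}$. The aperiodic identities are: - $\mathbf{S}$: $(\mathsf{E}+\mathsf{F})^*\equiv\mathsf{E}^*\cdot(\mathsf{F}\cdot\mathsf{E}^* )^*$ and $(\mathsf{E}+\mathsf{F})^*\equiv(\mathsf{E}^*\cdot\mathsf{F})^*\cdot\mathsf{E}^*$; - $\mathbf{P}$: $(\mathsf{E}\cdot\mathsf{F})^*\equiv\mathsf{1}+\mathsf{E}\cdot(\mathsf{F}\cdot\mathsf{E})^*\cdot\mathsf{F}$. For a set $\mathcal{I}$ of identities, $\mathcal{I}\vdash\mathsf{X}\equiv\mathsf{Y}$ means that $\mathsf{X}$ and $\mathsf{Y}$ are related by the smallest congruence on expressions (for $+$, $\cdot$ and ${}^*$) that contains all instances of the identities in $\mathcal{I}$, working modulo the trivial identities. System-solution method. For $p,q\in Q$, let $\mathsf{E}_{p,q}$ be the sum, written in some fixed order and bracketing, of the letters labelling the transitions from $p$ to $q$; it is $\mathsf{0}$ if there is no such transition. The method maintains a set $Q'\subseteq Q$ and expressions $\mathsf{G}_p$, $\mathsf{H}$, $\mathsf{F}_{p,q}$, $\mathsf{K}_p$ for $p,q\in Q'$. The initial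 values are: - $Q'=Q$; - $\mathsf{G}_p=\mathsf{1}$ if $p\in I$ and $\mathsf{0}$ otherwise; - $\mathsf{H}=\mathsf{0}$; - $\mathsf{F}_{p,q}=\mathsf{E}_{p,q}$; - $\mathsf{K}_p=\mathsf{1}$ if $p\in T$ and $\mathsf{0}$ otherwise. The states of $Q$ are then eliminated one by one in increasing order for $\omega$. Eliminating $q\in Q'$ replaces the expressions, for all $r,p\in Q'\setminus\{q\}$, by: - $\mathsf{G}_r\leftarrow\mathsf{G}_r+\mathsf{G}_q\cdot\mathsf{F}_{q,q}^*\cdot\mathsf{F}_{q,r}$; - $\mathsf{H}\leftarrow\mathsf{H}+\mathsf{G}_q\cdot\mathsf{F}_{q,q}^*\cdot\mathsf{K}_q$; - $\mathsf{F}_{r,p}\leftarrow\mathsf{F}_{r,p}+\mathsf{F}_{r,q}\cdot\mathsf{F}_{q,q}^*\cdot\mathsf{F}_{q,p}$; - $\mathsf{K}_r\leftarrow\mathsf{K}_r+\mathsf{F}_{r,q}\cdot\mathsf{F}_{q,q}^*\cdot\mathsf{K}_q$; and then sets $Q'\leftarrow Q'\setminus\{q\}$. When $Q'$ is empty, the final value of $\mathsf{H}$ is the expression $\mathsf{SR}_\omega(\mathcal{A})$. It denotes the language accepted by $\mathcal{A}$. *)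

From mathcomp Require Import all_boot.
Set Implicit Arguments. Unset Strict Implicit. Unset Printing Implicit Defensive.

Inductive rexp (A : Type) : Type :=
| Zero : rexp A
| One : rexp A
| Atom : A -> rexp A
| Plus : rexp A -> rexp A -> rexp A
| Conc : rexp A -> rexp A -> rexp A
| Star : rexp A -> rexp A.
Arguments Zero {A}. Arguments One {A}.

(* Smart constructors: computations are performed modulo the trivial
   identities E+0=E, 0+E=E, E.0=0, 0.E=0, E.1=E, 1.E=E, 0*=1. *)
Definition splus A (E F : rexp A) : rexp A :=
  match E, F with
  | Zero, _ => F
  | _, Zero => E
  | _, _ => Plus E F
  end.

Definition sconc A (E F : rexp A) : rexp A :=
  match E, F with
  | Zero, _ => Zero
  | _, Zero => Zero
  | One, _ => F
  | _, One => E
  | _, _ => Conc E F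
  end.

Definition sstar A (E : rexp A) : rexp A :=
  match E with
  | Zero => One
  | _ => Star E
  end.

Definition identities A := rexp A -> rexp A -> Prop.

Inductive Triv_ax A : identities A :=
| tr_plus0r E : Triv_ax (Plus E Zero) E
| tr_plus0l E : Triv_ax (Plus Zero E) E
| tr_conc0r E : Triv_ax (Conc E Zero) Zero
| tr_conc0l E : Triv_ax (Conc Zero E) Zero
| tr_conc1r E : Triv_ax (Conc E One) E
| tr_conc1l E : Triv_ax (Conc One E) E
| tr_star0 : Triv_ax (Star Zero) One.

Inductive N_ax A : identities A :=
| n_plusA E F G : N_ax (Plus (Plus E F) G) (Plus E (Plus F G))
| n_concA E F G : N_ax (Conc (Conc E F) G) (Conc E (Conc F G))
| n_distl E F G : N_ax (Conc E (Plus F G)) (Plus (Conc E F) (Conc E G))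
| n_distr E F G : N_ax (Conc (Plus E F) G) (Plus (Conc E G) (Conc F G))
| n_plusC E F : N_ax (Plus E F) (Plus F E).

Inductive S_ax A : identities A :=
| s_sumstar1 E F : S_ax (Star (Plus E F)) (Conc (Star E) (Star (Conc F (Star E))))
| s_sumstar2 E F : S_ax (Star (Plus E F)) (Conc (Star (Conc (Star E) F)) (Star E)).

Inductive P_ax A : identities A :=
| p_prodstar E F : P_ax (Star (Conc E F)) (Plus One (Conc (Conc E (Star (Conc F E))) F)).

Definition NSP A : identities A := fun X Y => N_ax X Y \/ S_ax X Y \/ P_ax X Y.

Inductive derivable A (I : identities A) : rexp A -> rexp A -> Prop :=
| d_ax X Y : I X Y -> derivable I X Y
| d_triv X Y : Triv_ax X Y -> derivable I X Y
| d_refl X : derivable I X X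
| d_sym X Y : derivable I X Y -> derivable I Y X
| d_trans X Y Z : derivable I X Y -> derivable I Y Z -> derivable I X Z
| d_plus X X' Y Y' : derivable I X X' -> derivable I Y Y' ->
    derivable I (Plus X Y) (Plus X' Y')
| d_conc X X' Y Y' : derivable I X X' -> derivable I Y Y' ->
    derivable I (Conc X Y) (Conc X' Y')
| d_star X X' : derivable I X X' -> derivable I (Star X) (Star X').

Record automaton (Q A : finType) := Automaton {
  trans : {set Q * A * Q};
  initial : {set Q};
  final : {set Q} }.

Section SR.
Variables (Q A : finType) (aut : automaton Q A).

Definition Epq (p q : Q) : rexp A :=
  foldr (fun a e => splus (Atom a) e) Zero
        [seq a <- enum A | (p, a, q) \in trans aut].

Record sstate := SState {
  stG : Q -> rexp A; stH : rexp A; stF : Q -> Q -> rexp A; stK : Q -> rexp A }.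

Definition init_state : sstate :=
  SState (fun p => if p \in initial aut then One else Zero) Zero Epq
         (fun p => if p \in final aut then One else Zero).

(* Eliminate q; [rest] is Q' \ {q}. *)
Definition elim_step (rest : seq Q) (q : Q) (st : sstate) : sstate :=
  let Fqq := sstar (stF st q q) in
  SState
    (fun r => if r \in rest
              then splus (stG st r) (sconc (sconc (stG st q) Fqq) (stF st q r))
              else stG st r)
    (splus (stH st) (sconc (sconc (stG st q) Fqq) (stK st q)))
    (fun r p => if (r \in rest) && (p \in rest)
                then splus (stF st r p) (sconc (sconc (stF st r q) Fqq) (stF st q p))
                else stF st r p)
    (fun r => if r \in rest
              then splus (stK st r) (sconc (sconc (stF st r q) Fqq) (stK st q))
              else stK st r).

Fixpoint run (s : seq Q) (st : sstate) : sstate :=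
  match s with
  | [::] => st
  | q :: s' => run s' (elim_step s' q st)
  end.

(* A total order omega on Q is represented by the list of the elements of Q
   in increasing order (a permutation of enum Q). *)
Definition SR (omega : seq Q) : rexp A := stH (run omega init_state).

End SR.

(* Eliminating a state q applies to every coefficient the update
   [e + a F_qq* b] (the row G and column K behave like an extra initial and
   an extra terminal state). Any two orders differ by adjacent transpositions,
   so it suffices that eliminating q then p gives, up to N, S and P, the same
   coefficients as p then q. After two eliminations each coefficient reads
   [e + (a_p, a_q) M (b_p, b_q)^T] where M is the star of the 2x2 block matrix
   [[x, y], [w, z]] of the two eliminated states; the two orders compute M by
   the two block formulas
     M_pp = (x + y z* w)* = x* + x* y (z + w x* y)* w x*,
     M_pq = (x + y z* w)* y z* = x* y (z + w x* y)*,
   which follow from the sum-star identities S and the product-star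
   identity P. *)
From Stdlib Require Import Setoid Morphisms.
From mathcomp Require Import all_boot.
Set Implicit Arguments. Unset Strict Implicit. Unset Printing Implicit Defensive.

Add Parametric Relation (A : Type) (I : identities A) : (rexp A) (derivable I)
  reflexivity proved by (@d_refl A I)
  symmetry proved by (@d_sym A I)
  transitivity proved by (@d_trans A I) as derivable_rel.

#[local] Hint Resolve d_refl : core.

Add Parametric Morphism (A : Type) (I : identities A) : (@Plus A)
  with signature derivable I ==> derivable I ==> derivable I as Plus_derivable.
Proof. by move=> *; apply: d_plus. Qed.

Add Parametric Morphism (A : Type) (I : identities A) : (@Conc A)
  with signature derivable I ==> derivable I ==> derivable I as Conc_derivable.
Proof. by move=> *; apply: d_conc. Qed.

Add Parametric Morphism (A : Type) (I : identities A) : (@Star A)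
  with signature derivable I ==> derivable I as Star_derivable.
Proof. by move=> *; apply: d_star. Qed.

Section TrivialIdentities.
Variables (A : Type) (I : identities A).
Local Notation "X ≡ Y" := (derivable I X Y) (at level 70).
Implicit Types E F : rexp A.

Lemma plus0l E : Plus Zero E ≡ E. Proof. by apply: d_triv; constructor. Qed.
Lemma plus0r E : Plus E Zero ≡ E. Proof. by apply: d_triv; constructor. Qed.
Lemma conc0l E : Conc Zero E ≡ Zero. Proof. by apply: d_triv; constructor. Qed.
Lemma conc0r E : Conc E Zero ≡ Zero. Proof. by apply: d_triv; constructor. Qed.
Lemma conc1l E : Conc One E ≡ E. Proof. by apply: d_triv; constructor. Qed.
Lemma conc1r E : Conc E One ≡ E. Proof. by apply: d_triv; constructor. Qed.
Lemma star0 : Star (@Zero A) ≡ One. Proof. by apply: d_triv; constructor. Qed.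

Lemma splusE E F : splus E F ≡ Plus E F.
Proof.
by case: E => [||?|??|??|?]; case: F => [||?|??|??|?] /=;
  rewrite ?plus0l ?plus0r.
Qed.

Lemma sconcE E F : sconc E F ≡ Conc E F.
Proof.
by case: E => [||?|??|??|?]; case: F => [||?|??|??|?] /=;
  rewrite ?conc0l ?conc0r ?conc1l ?conc1r.
Qed.

Lemma sstarE E : sstar E ≡ Star E.
Proof. by case: E => [||?|??|??|?] /=; rewrite ?star0. Qed.

End TrivialIdentities.

Add Parametric Morphism (A : Type) (I : identities A) : (@splus A)
  with signature derivable I ==> derivable I ==> derivable I as splus_derivable.
Proof. by move=> ? ? E ? ? F; rewrite !splusE E F. Qed.

Add Parametric Morphism (A : Type) (I : identities A) : (@sconc A)
  with signature derivable I ==> derivable I ==> derivable I as sconc_derivable.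
Proof. by move=> ? ? E ? ? F; rewrite !sconcE E F. Qed.

Add Parametric Morphism (A : Type) (I : identities A) : (@sstar A)
  with signature derivable I ==> derivable I as sstar_derivable.
Proof. by move=> ? ? E; rewrite !sstarE E. Qed.

Definition elim_coef A (e a b f : rexp A) : rexp A :=
  splus e (sconc (sconc a (sstar f)) b).

Section NSPCalculus.
Variable A : Type.
Local Notation "X ≡ Y" := (derivable (@NSP A) X Y) (at level 70).
Implicit Types a b e x y z w : rexp A.

Lemma plusC a b : Plus a b ≡ Plus b a.
Proof. by apply: d_ax; left; constructor. Qed.

Lemma plusA a b e : Plus (Plus a b) e ≡ Plus a (Plus b e).
Proof. by apply: d_ax; left; constructor. Qed.

Lemma plusCA a b e : Plus a (Plus b e) ≡ Plus b (Plus a e).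
Proof. by rewrite -plusA (plusC a b) plusA. Qed.

Lemma concA a b e : Conc (Conc a b) e ≡ Conc a (Conc b e).
Proof. by apply: d_ax; left; constructor. Qed.

Lemma concDr a b e : Conc a (Plus b e) ≡ Plus (Conc a b) (Conc a e).
Proof. by apply: d_ax; left; constructor. Qed.

Lemma concDl a b e : Conc (Plus a b) e ≡ Plus (Conc a e) (Conc b e).
Proof. by apply: d_ax; left; constructor. Qed.

Lemma star_plusl a b : Star (Plus a b) ≡ Conc (Star a) (Star (Conc b (Star a))).
Proof. by apply: d_ax; right; left; constructor. Qed.

Lemma star_plusr a b : Star (Plus a b) ≡ Conc (Star (Conc (Star a) b)) (Star a).
Proof. by apply: d_ax; right; left; constructor. Qed.

Lemma star_conc a b : Star (Conc a b) ≡ Plus One (Conc (Conc a (Star (Conc b a))) b).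
Proof. by apply: d_ax; right; right; constructor. Qed.

Lemma star_unfold a : Star a ≡ Plus One (Conc a (Star a)).
Proof. by have := star_conc a One; rewrite conc1r conc1l conc1r. Qed.

Lemma star_conc_slide a b : Conc (Star (Conc a b)) a ≡ Conc a (Star (Conc b a)).
Proof.
rewrite (star_conc b a) concDr conc1r {1}(star_unfold (Conc a b)) concDl conc1l.
by rewrite !concA.
Qed.

Lemma star_schur_diag x y z w :
  Star (Plus x (Conc (Conc y (Star z)) w)) ≡
  Plus (Star x)
    (Conc (Conc (Conc (Conc (Star x) y) (Star (Plus z (Conc (Conc w (Star x)) y)))) w)
          (Star x)).
Proof. by rewrite star_plusl (star_plusr z) !concA star_conc concDr conc1r !concA. Qed.

Lemma star_schur_offdiag x y z w :
  Conc (Conc (Star (Plus x (Conc (Conc y (Star z)) w))) y) (Star z) ≡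
  Conc (Conc (Star x) y) (Star (Plus z (Conc (Conc w (Star x)) y))).
Proof.
rewrite star_plusr (star_plusl z) !concA.
by have := star_conc_slide (Conc (Star x) (Conc y (Star z))) w; rewrite !concA => ->.
Qed.

Lemma elim_coef_twice e ap aq bp bq x y z w :
  let X := Star (Plus x (Conc (Conc y (Star z)) w)) in
  elim_coef (elim_coef e aq bq z) (elim_coef ap aq w z) (elim_coef bp y bq z)
            (elim_coef x y w z) ≡
  Plus e (Plus (Plus (Conc (Conc ap X) bp)
                     (Conc (Conc ap (Conc (Conc X y) (Star z))) bq))
               (Plus (Conc (Conc aq (Conc (Conc (Star z) w) X)) bp)
                     (Conc (Conc aq (Plus (Star z)
                                          (Conc (Conc (Conc (Conc (Star z) w) X) y)
                                                (Star z)))) bq))).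
Proof.
rewrite /elim_coef !splusE !sconcE !sstarE ?splusE ?sconcE ?sstarE.
rewrite !concDl !concDr !concDl !concA !plusA; apply: Plus_derivable_Proper => //.
by do 3 (rewrite plusCA; apply: Plus_derivable_Proper => //).
Qed.

Lemma elim_coef_comm e ap aq bp bq x y z w :
  elim_coef (elim_coef e aq bq z) (elim_coef ap aq w z) (elim_coef bp y bq z)
            (elim_coef x y w z) ≡
  elim_coef (elim_coef e ap bp x) (elim_coef aq ap y x) (elim_coef bq w bp x)
            (elim_coef z w y x).
Proof.
rewrite elim_coef_twice (elim_coef_twice e aq ap bq bp z w x y) /=.
apply: Plus_derivable_Proper => //.
rewrite (plusC (Plus (Conc (Conc aq _) bq) _)).
apply: Plus_derivable_Proper; rewrite plusC; apply: Plus_derivable_Proper;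
  apply: Conc_derivable_Proper => //; apply: Conc_derivable_Proper => //.
- exact: star_schur_offdiag.
- exact: star_schur_diag.
- symmetry; exact: star_schur_diag.
- symmetry; exact: star_schur_offdiag.
Qed.

End NSPCalculus.
Section Elimination.
Variables (Q A : finType).
Local Notation "X ≡ Y" := (derivable (@NSP A) X Y) (at level 70).
Implicit Types (s : seq Q) (st : sstate Q A).

Definition state_eqv s st1 st2 :=
  stH st1 ≡ stH st2 /\
  forall r, r \in s -> [/\ stG st1 r ≡ stG st2 r, stK st1 r ≡ stK st2 r &
                          forall p, p \in s -> stF st1 r p ≡ stF st2 r p].

Lemma state_eqv_refl s st : state_eqv s st st.
Proof. by split=> // r _; split. Qed.

Lemma state_eqv_sym s st1 st2 : state_eqv s st1 st2 -> state_eqv s st2 st1.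
Proof.
case=> eqH eqS; split=> [|r /eqS [eqG eqK eqF]]; first by symmetry.
by split=> [||p /eqF]; symmetry.
Qed.

Ltac congr_rexp :=
  repeat first [ apply: splus_derivable_Proper | apply: sconc_derivable_Proper
               | apply: sstar_derivable_Proper | assumption | reflexivity ].

Lemma elim_step_eqv s1 s2 q st1 st2 : s1 =i s2 -> state_eqv (q :: s1) st1 st2 ->
  state_eqv s1 (elim_step s1 q st1) (elim_step s2 q st2).
Proof.
move=> eq_s [eqH eqS].
have [eqGq eqKq eqFq] := eqS q (mem_head _ _).
have eqFqq := eqFq q (mem_head _ _).
have s1_sub : {subset s1 <= q :: s1} := @mem_behead _ (q :: s1).
split=> [|r r_s1]; first by rewrite /elim_step /=; congr_rexp.
have [eqGr eqKr eqFr] := eqS r (s1_sub r r_s1).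
have eqFrq := eqFr q (mem_head _ _).
have eqFqr := eqFq r (s1_sub r r_s1).
rewrite /elim_step /= r_s1 -eq_s r_s1; split=> [||p p_s1]; try by congr_rexp.
have eqFrp := eqFr p (s1_sub p p_s1).
have eqFqp := eqFq p (s1_sub p p_s1).
by rewrite p_s1 -eq_s p_s1 /=; congr_rexp.
Qed.

Lemma run_eqv s st1 st2 : state_eqv s st1 st2 -> stH (run s st1) ≡ stH (run s st2).
Proof.
elim: s st1 st2 => [|q s IH] st1 st2 eq_st /=; first by case: eq_st.
exact/IH/elim_step_eqv.
Qed.

Lemma elim_step_comm s p q st :
  state_eqv s (elim_step s p (elim_step (p :: s) q st))
              (elim_step s q (elim_step (q :: s) p st)).
Proof.
split=> [|r r_s]; rewrite /elim_step /= !inE !eqxx /=; first exact: elim_coef_comm.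
rewrite r_s !orbT /=; split=> [||p' p'_s]; try exact: elim_coef_comm.
by rewrite !inE p'_s !orbT; apply: elim_coef_comm.
Qed.

Lemma run_move_front s1 q s2 st :
  stH (run (s1 ++ q :: s2) st) ≡ stH (run (q :: s1 ++ s2) st).
Proof.
elim: s1 st => [|p s1 IH] st //=.
rewrite IH /=; apply: d_trans (run_eqv (elim_step_comm _ _ _ _)).
apply: run_eqv; apply: elim_step_eqv => //; apply: state_eqv_sym.
apply: elim_step_eqv (state_eqv_refl _ _) => r.
by rewrite !(mem_cat, inE) orbCA.
Qed.

Lemma run_perm s s' st : perm_eq s s' -> stH (run s st) ≡ stH (run s' st).
Proof.
elim: s s' st => [|q s IH] s' st eq_ss'.
  by move: eq_ss'; rewrite perm_sym => /perm_nilP ->.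
have q_s' : q \in s' by rewrite -(perm_mem eq_ss') mem_head.
case/splitPr: q_s' eq_ss' => s1 s2.
rewrite perm_sym -(cat1s q s2) perm_catCA /= perm_cons perm_sym => eq_s.
rewrite run_move_front /= (IH _ _ eq_s).
apply: run_eqv; apply: state_eqv_sym.
by apply: elim_step_eqv (state_eqv_refl _ _) => r; rewrite (perm_mem eq_s).
Qed.

End Elimination.

Theorem corollary3p7 (Q A : finType) (aut : automaton Q A) (omega omega' : seq Q) :
  perm_eq omega (enum Q) -> perm_eq omega' (enum Q) ->
  derivable (@NSP A) (SR aut omega) (SR aut omega').
Proof.
move=> omega_enum omega'_enum; apply: run_perm.
by rewrite (perm_trans omega_enum) // perm_sym.
Qed.
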